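(* Let $G=(V,E)$ be a finite connected graph and $A$ an irreducible, lazy transition matrix on $V$, with $E_A=\{(i,j):A(i,j)>0\}$. Let $M$ be the transition matrix of the Markov chain on $\bar S=S\times V$ which moves from $(x,v)$ to $(T_{v'}x,v')$ with probability $A(v,v')$. For each $i\in V$ fix a finite integer $s(i)$ and a sequence $(i=i_1,\dots,i_{s(i)})$ with $(i_j,i_{j+1})\in E_A$ such that $x^{(i)}:=T_{i_{s(i)}}\cdots T_{i_1}(T_i)^{s(i)}x$ is the same for all $x\in S^{(i)}$, and let $\bar S_1=\{(x^{(i)},i_{s(i)}):i\in V\}$. Then $M$ is uniformly communicating to $\bar S_1$ with a finite communication time: there exist a finite integer $\bar s$ and $\bar\alpha'>0$ such that $$\inf_{(x,v)\in\bar S,\;\bar x\in\bar S_1}M^{\bar s}((x,v),\bar x)\ge\bar\alpha'.$$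
   Context: $S=(-\mathbb{N}_0)^V$ and $S^{(i)}=\{x\in S:x_i=0\}$. For $x\in S$ and $i\in V$, $T_ix\in S$ is obtained by first setting $x'_i=\max\{x_k:\operatorname{dist}(k,i)\le1\}+1$, $x'_j=x_j$ for $j\ne i$ (dist the graph distance in $G$), and then $(T_ix)_j=x'_j-\max_kx'_k$. Irreducible: for all $v\neq v'$ there is $s$ with $A^s(v,v')>0$; lazy: $A(v,v)>0$ for all $v$. (Sequences as required for each $i$ exist.) *)

From HB Require Import structures.
From mathcomp Require Import all_boot all_order all_algebra.
Set Implicit Arguments. Unset Strict Implicit. Unset Printing Implicit Defensive.
Import Order.TTheory GRing.Theory Num.Theory.
Local Open Scope ring_scope.

Section Defs.
Variable V : finType.

Definition simple_graph (e : rel V) : Prop := symmetric e /\ irreflexive e.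
Definition connected_graph (e : rel V) : Prop := forall u v : V, connect e u v.

(* Configurations: S = (-N_0)^V, elements x : V -> int with x_v <= 0. *)
Definition config := {ffun V -> int}.
Definition inS (x : config) : Prop := forall v, x v <= 0.
Definition inSi (i : V) (x : config) : Prop := inS x /\ x i = 0.

(* T_i: x'_i = max{x_k : dist(k,i) <= 1} + 1 (dist(k,i) <= 1 iff k = i or k ~ i),
   x'_j = x_j otherwise, then (T_i x)_j = x'_j - max_k x'_k. *)
Definition Tmap (e : rel V) (i : V) (x : config) : config :=
  let m := \big[Order.max/x i]_(k | e k i) x k in
  let x' : config := [ffun j => if j == i then m + 1 else x j] in
  let M := \big[Order.max/x' i]_(k : V) x' k in
  [ffun j => x' j - M].

Definition xseq (e : rel V) (i : V) (sq : seq V) (x : config) : config :=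
  foldl (fun y j => Tmap e j y) (iter (size sq) (Tmap e i) x) sq.

Variable R : realFieldType.

Definition stochastic (A : V -> V -> R) : Prop :=
  (forall u v, 0 <= A u v) /\ (forall u, \sum_(v : V) A u v = 1).

Fixpoint Apow (A : V -> V -> R) (s : nat) (u v : V) : R :=
  match s with
  | 0 => (u == v)%:R
  | s'.+1 => \sum_(w : V) A u w * Apow A s' w v
  end.

Definition irreducible (A : V -> V -> R) : Prop :=
  forall v v', v != v' -> exists s, 0 < Apow A s v v'.
Definition lazy (A : V -> V -> R) : Prop := forall v, 0 < A v v.

Definition Mker (e : rel V) (A : V -> V -> R) (x : config) (v : V)
  (y : config) (w : V) : R := A v w * (y == Tmap e w x)%:R.

(* M^s((x,v),(y,w)).  Row (x,v) of M is supported on the finitely many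
   distinct states (T_{v'} x, v'), so the matrix product reduces to a finite sum. *)
Fixpoint Mpow (e : rel V) (A : V -> V -> R) (s : nat) (x : config) (v : V)
  (y : config) (w : V) : R :=
  match s with
  | 0 => ((x == y) && (v == w))%:R
  | s'.+1 => \sum_(v' : V) Mker e A x v (Tmap e v' x) v' * Mpow e A s' (Tmap e v' x) v' y w
  end.

End Defs.

From HB Require Import structures.
From mathcomp Require Import all_boot all_order all_algebra.
From mathcomp Require Import zify.
Import Order.TTheory GRing.Theory Num.Theory.
Local Open Scope ring_scope.
Set Implicit Arguments. Unset Strict Implicit. Unset Printing Implicit Defensive.

(* Say that k is within d of the top of x when x_j <= x_k + d for all j.  One
   application of T_w enlarges this gap by at most one, and if k = w or k ~ w
   it moves the top to within d - 1 of w.  So from (x, v), starting at an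
   argmax of x and following a graph path to i, each graph step to p is made
   by walking with the chain to p (at most #|V| moves) and then staying at p,
   which A being lazy allows, until p is the top, i.e. the configuration lies
   in S^(p).  Padding every move to a fixed length, all (x, v) reach some
   (y, i) with y in S^(i) in the same number of steps, from where the
   prescribed sequence leads to (x^(i), i_s(i)).  Each step has probability
   at least the smallest positive entry of A. *)

Lemma last_nseq (T : Type) (a : T) n : last a (nseq n a) = a.
Proof. by elim: n. Qed.

Lemma path_nseq (T : Type) (r : rel T) a n : r a a -> path r a (nseq n a).
Proof. by move=> raa; elim: n => //= n ->; rewrite raa. Qed.

Lemma shorten_path (T : finType) (r : rel T) a s : path r a s ->
  exists s', [/\ path r a s', last a s' = last a s & (size s' < #|T|)%N].
Proof.
case/shortenP=> s' hs' /card_uniqP hsize _; exists s'; split=> //.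
by have := max_card (mem (a :: s')); rewrite hsize.
Qed.

Section Dynamics.
Variables (V : finType) (e : rel V).
Implicit Types (x y : config V) (u w k p : V).

Definition max_gap x k (d : nat) := forall j, x j <= x k + d%:Z.

Definition nbhd u p := (u == p) || e u p.

Lemma nbhd_refl p : nbhd p p.
Proof. by rewrite /nbhd eqxx. Qed.

Lemma nbhd_path_of_connect a b : connect e a b ->
  exists ts, [/\ path nbhd a ts, last a ts = b & size ts = #|V|].
Proof.
case/connectP=> s hs ->; have [s' [hs' hlast /ltnW hsize]] := shorten_path hs.
have ns' : path nbhd a s' by apply: sub_path hs' => ? ? h; rewrite /nbhd h orbT.
exists (s' ++ nseq (#|V| - size s') (last a s)).
rewrite cat_path ns' hlast path_nseq ?nbhd_refl //.
by rewrite last_cat hlast last_nseq size_cat size_nseq subnKC.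
Qed.

Definition nbr_max w x := \big[Order.max/x w]_(k | e k w) x k.

Definition raise w x : config V :=
  [ffun j => if j == w then nbr_max w x + 1 else x j].

Definition cfg_max x k0 := \big[Order.max/x k0]_(j : V) x j.

Lemma TmapE w x j : Tmap e w x j = raise w x j - cfg_max (raise w x) w.
Proof. by rewrite /Tmap ffunE. Qed.

Lemma raiseE w x j : raise w x j = if j == w then nbr_max w x + 1 else x j.
Proof. by rewrite ffunE. Qed.

Lemma le_nbr_max w x u : nbhd u w -> x u <= nbr_max w x.
Proof. by case/orP=> [/eqP ->|euw]; [exact: bigmax_ge_id|exact: le_bigmax_cond]. Qed.

Lemma nbr_max_le w x k d : max_gap x k d -> nbr_max w x <= x k + d%:Z.
Proof. by move=> gap; apply/bigmax_leP. Qed.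

Lemma max_gap_Tmap w x k d : max_gap (Tmap e w x) k d <-> max_gap (raise w x) k d.
Proof. by split=> gap j; have := gap j; rewrite !TmapE addrAC lerD2r. Qed.

Lemma Tmap_le0 w x j : Tmap e w x j <= 0.
Proof. by rewrite TmapE subr_le0; exact: le_bigmax. Qed.

Lemma Tmap_inSi w x k : max_gap (Tmap e w x) k 0 -> inSi k (Tmap e w x).
Proof.
move=> /max_gap_Tmap gap; split=> [j|]; first exact: Tmap_le0.
apply/eqP; rewrite eq_le Tmap_le0 TmapE subr_ge0.
by apply/bigmax_leP; split=> [|j _]; rewrite -[raise w x k]addr0.
Qed.

Lemma max_gap_Tmap_succ w x k d : max_gap x k d -> max_gap (Tmap e w x) k d.+1.
Proof.
move=> gap; apply/max_gap_Tmap => j.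
have hwk := nbr_max_le w gap; have hww := le_nbr_max x (nbhd_refl w).
rewrite !raiseE; have := gap j.
by case: (j =P w) => [->|_]; case: (k =P w) => [->|_]; lia.
Qed.

Lemma max_gap_Tmap_pred w x u d :
  nbhd u w -> max_gap x u d -> max_gap (Tmap e w x) w d.-1.
Proof.
move=> /(le_nbr_max x) huw gap; apply/max_gap_Tmap => j.
by rewrite !raiseE eqxx; have := gap j; case: (j =P w) => [->|_]; lia.
Qed.

Definition run x ws := foldl (fun y j => Tmap e j y) x ws.

Lemma run_cat x s1 s2 : run x (s1 ++ s2) = run (run x s1) s2.
Proof. exact: foldl_cat. Qed.

Lemma xseq_run i sq x : xseq e i sq x = run x (nseq (size sq) i ++ sq).
Proof.
rewrite run_cat /xseq; congr run.
by elim: (size sq) x => // n IH x; rewrite iterSr IH.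
Qed.

Lemma max_gap_run ws x k d : max_gap x k d -> max_gap (run x ws) k (d + size ws).
Proof.
elim: ws x d => [|w ws IH] x d gap /=; first by rewrite addn0.
by rewrite addnS -addSn; apply/IH/max_gap_Tmap_succ.
Qed.

Lemma max_gap_run_stay n p x u d : nbhd u p -> max_gap x u d ->
  max_gap (run x (nseq n.+1 p)) p (d - n.+1).
Proof.
elim: n x u d => [|n IH] x u d hup gap; first by rewrite subn1; exact: max_gap_Tmap_pred gap.
rewrite (_ : (d - n.+2 = d.-1 - n.+1)%N); last by lia.
exact: IH (nbhd_refl p) (max_gap_Tmap_pred hup gap).
Qed.

Lemma run_inSi ws x k : ws != [::] -> max_gap (run x ws) k 0 -> inSi k (run x ws).
Proof. by case/lastP: ws => // s w _; rewrite /run foldl_rcons; exact: Tmap_inSi. Qed.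

End Dynamics.

Section Walks.
Variables (V : finType) (e : rel V) (R : realFieldType) (A : V -> V -> R).
Hypotheses (A_ge0 : forall u w, 0 <= A u w) (A_irr : irreducible A) (A_lazy : lazy A).
Implicit Types (x y : config V) (u v w p : V).

Local Notation EA := (fun a b : V => 0 < A a b).

Definition reach x v n y w := exists ws : seq V,
  [/\ size ws = n, path EA v ws, last v ws = w & run e x ws = y].

Lemma reach_cat x v n1 y w n2 z t :
  reach x v n1 y w -> reach y w n2 z t -> reach x v (n1 + n2) z t.
Proof.
case=> [s1 [<- p1 <- <-]] [s2 [<- p2 <- <-]]; exists (s1 ++ s2).
by rewrite size_cat cat_path last_cat run_cat p1 p2.
Qed.

Lemma Mpow_ge0 n x v y w : 0 <= Mpow e A n x v y w.
Proof.
elim: n x v => [|n IH] x v /=; first by rewrite ler0n.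
by apply: sumr_ge0 => v' _; rewrite mulr_ge0 // mulr_ge0 // ler0n.
Qed.

Lemma Mpow_reach (a : R) x v n y w : 0 < a -> (forall u w, 0 < A u w -> a <= A u w) ->
  reach x v n y w -> a ^+ n <= Mpow e A n x v y w.
Proof.
move=> a_gt0 a_le [ws [<- + <- <-]]; elim: ws x v => [|j ws IH] x v /=.
  by rewrite !eqxx expr0.
case/andP=> hvj hws; rewrite (bigD1 j) //= /Mker eqxx mulr1 exprS -[_ * _]addr0.
apply: lerD; last by apply: sumr_ge0 => v' _; rewrite !mulr_ge0 ?Mpow_ge0 ?ler0n.
by apply: ler_pM; [exact: ltW|exact: exprn_ge0 (ltW _)|exact: a_le|exact: IH].
Qed.

Lemma walk_of_Apow s a b : 0 < Apow A s a b ->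
  exists ws, path EA a ws /\ last a ws = b.
Proof.
elim: s a => [|s IH] a /=; first by case: eqP => [->|]; [exists [::]|rewrite ltxx].
case: (boolP [exists w, 0 < A a w * Apow A s w b]) => [/existsP [w hw] _|/existsPn none].
  have hA : 0 < A a w by rewrite lt0r A_ge0 andbT; apply: contraTneq hw => ->; rewrite mul0r ltxx.
  have hApow : 0 < Apow A s w b by move: hw; rewrite pmulr_rgt0.
  have [ws [hws <-]] := IH w hApow.
  by exists (w :: ws); rewrite /= hA.
by rewrite ltNge sumr_le0 // => w _; rewrite leNgt none.
Qed.

Lemma short_walk a b : exists ws, [/\ path EA a ws, last a ws = b & (size ws <= #|V|)%N].
Proof.
have [ws [hws <-]] : exists ws, path EA a ws /\ last a ws = b.
  have [<-|hab] := eqVneq a b; first by exists [::].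
  by have [s /walk_of_Apow] := A_irr hab.
by have [ws' [? ? /ltnW ?]] := shorten_path hws; exists ws'.
Qed.

Lemma reach_stay p y n : max_gap y p 0 -> exists y', reach y p n.+1 y' p /\ inSi p y'.
Proof.
move=> gap; exists (run e y (nseq n.+1 p)); split.
  by exists (nseq n.+1 p); rewrite size_nseq last_nseq path_nseq.
by apply: run_inSi => //; have := max_gap_run_stay n (nbhd_refl e p) gap; rewrite sub0n.
Qed.

Lemma reach_stage x v u p : nbhd e u p -> max_gap x u 0 ->
  exists y, reach x v (2 * #|V|).+1 y p /\ max_gap y p 0.
Proof.
move=> hup gap; have [ws [hws hlast hsize]] := short_walk v p.
(* The walk widens the gap by at most size ws <= c, which the c + 1 stays at p close. *)
set c := (2 * #|V| - size ws)%N.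
exists (run e x (ws ++ nseq c.+1 p)); split.
  exists (ws ++ nseq c.+1 p); split=> //.
  - by rewrite size_cat size_nseq /c; lia.
  - by rewrite cat_path hws hlast path_nseq.
  - by rewrite last_cat hlast last_nseq.
rewrite run_cat; have := max_gap_run_stay c hup (max_gap_run e ws gap).
by rewrite (_ : (0 + size ws - c.+1 = 0)%N) // /c; lia.
Qed.

Lemma reach_along x v u t ts : max_gap x u 0 -> path (nbhd e) u (t :: ts) ->
  exists y, reach x v ((size ts).+1 * (2 * #|V|).+1) y (last t ts) /\ max_gap y (last t ts) 0.
Proof.
elim: ts x v u t => [|t' ts IH] x v u t gap /andP [hut hts].
  by rewrite mul1n; exact: (reach_stage v hut gap).
have [y1 [r1 g1]] := reach_stage v hut gap.
have [y [r2 g2]] := IH y1 t t t' g1 hts.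
by exists y; split=> //; rewrite mulSn; exact: reach_cat r1 r2.
Qed.

Lemma reach_inSi_uniform : connected_graph e -> forall x v i n,
  exists y, reach x v (#|V|.+1 * (2 * #|V|).+1 + n.+1) y i /\ inSi i y.
Proof.
move=> e_conn x v i n; pose k := [arg max_(j > v) x j]%O.
have gap : max_gap x k 0 by rewrite /k; case: arg_maxP => // j _ hj j'; rewrite addr0; exact: hj.
have [ts [hts hlast hsize]] := nbhd_path_of_connect (e_conn k i).
have kts : path (nbhd e) k (k :: ts) by rewrite /= nbhd_refl.
have [y [r1 g1]] := reach_along v gap kts; rewrite hlast hsize in r1 g1.
have [y' [r2 g2]] := reach_stay n g1.
by exists y'; split=> //; exact: reach_cat r1 r2.
Qed.

Lemma reach_xseq i sq y : sq != [::] -> head i sq = i -> path EA i (behead sq) ->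
  reach y i (2 * size sq) (xseq e i sq y) (last i sq).
Proof.
case: sq => // j sq _ /= -> hsq; rewrite xseq_run.
exists (nseq (size sq).+1 i ++ i :: sq); split=> //.
- by rewrite size_cat size_nseq /=; lia.
- by rewrite cat_path path_nseq // last_nseq /= A_lazy.
- by rewrite last_cat last_nseq.
Qed.

End Walks.

Unset Implicit Arguments.
Set Strict Implicit.
Theorem mainTheorem10 (V : finType) (R : realFieldType) (e : rel V) (A : V -> V -> R)
  (sq : V -> seq V) :
  simple_graph e -> connected_graph e ->
  stochastic A -> irreducible A -> lazy A ->
  (* the sequences (i = i_1, ..., i_{s(i)}) with (i_j, i_{j+1}) in E_A *)
  (forall i, sq i != [::]) ->
  (forall i, head i (sq i) = i) ->
  (forall i, path (fun a b => 0 < A a b) i (behead (sq i))) ->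
  (* x^(i) is the same for all x in S^(i) *)
  (forall i x y, inSi i x -> inSi i y -> xseq e i (sq i) x = xseq e i (sq i) y) ->
  exists (sbar : nat) (alpha : R), 0 < alpha /\
    forall (x : config V) (v : V), inS x ->
    forall (i : V) (z : config V), inSi i z ->
      alpha <= Mpow e A sbar x v (xseq e i (sq i) z) (last i (sq i)).
Proof.
move=> _ e_conn [A_ge0 _] A_irr A_lazy sq_ne sq_head sq_path sq_const.
pose a := \big[Order.min/1]_(p : V * V | 0 < A p.1 p.2) A p.1 p.2.
have a_gt0 : 0 < a by apply/bigmin_gtP; split=> [|p] //; exact: ltr01.
have a_le u w : 0 < A u w -> a <= A u w by exact: (bigmin_le_cond _ (j := (u, w)) _).
pose L := \max_i size (sq i).
pose N := (#|V|.+1 * (2 * #|V|).+1 + (2 * L).+1)%N.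
exists N, (a ^+ N); split; first exact: exprn_gt0.
move=> x v _ i z zi.
have [y [rxy yi]] := reach_inSi_uniform A_ge0 A_irr A_lazy e_conn x v i (2 * L - 2 * size (sq i)).
have -> : N = (#|V|.+1 * (2 * #|V|).+1 + (2 * L - 2 * size (sq i)).+1 + 2 * size (sq i))%N.
  by have := @leq_bigmax _ (fun j => size (sq j)) i; rewrite /N /L; lia.
rewrite -(sq_const i y z yi zi); apply: (Mpow_reach A_ge0 a_gt0 a_le).
exact: reach_cat rxy (reach_xseq e A_lazy y (sq_ne i) (sq_head i) (sq_path i)).
Qed.
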